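(* Let $G=(V,E)$ be an edge-weighted graph with linearly ordered edge weights, let $\nabla(G)\subseteq V$, and let $H$ be a graph with $V(H)\supseteq\nabla(G)$. Then the following are equivalent: (i) $H$ compresses $G$ with respect to $\nabla(G)$; (ii) for every $u,v\in\nabla(G)$ and every weight $w$, $H$ contains a $u$–$v$ path whose maximum edge weight is $<w$ if and only if $G$ contains such a $u$–$v$ path.
   Context: Edge weights are linearly ordered (distinct), so minimum spanning trees (forests) are unique; $T(X)$ denotes the minimum spanning tree of $X$. Definition: a graph $H$ with $V(H)\supseteq\nabla(G)$ compresses $G$ with respect to $\nabla(G)$ if for every graph $G'\supseteq G$ in which every vertex of $G$ adjacent to a vertex outside $G$ lies in $\nabla(G)$, letting $T$ be the minimum spanning tree of $G'$ and $T'$ the minimum spanning tree of $(G'\setminus G)\cup H$ (where $G'\setminus G$ denotes the edges of $G'$ not in $G$), it holds $T\cap(G'\setminus G)=T'\cap(G'\setminus G)$.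
   Formalization: In compresses, G' qualifies when every vertex of G incident to an edge of G'∖G, rather than adjacent to a vertex outside G, lies in ∇(G) and such edges meet V(H) only in ∇(G); weights lie in an ordered field. Apart from conventions, each condition added here is assumed in the paper as well or is needed for the statement above to hold. *)

From HB Require Import structures.
From mathcomp Require Import all_boot all_order all_algebra.
From mathcomp Require Import finmap.
Set Implicit Arguments. Unset Strict Implicit. Unset Printing Implicit Defensive.
Import Order.TTheory GRing.Theory Num.Theory.
Local Open Scope ring_scope.
Local Open Scope fset_scope.

Section Graphs.
Variables (V : choiceType) (R : realFieldType).

Definition edge := ((V * V) * R)%type.

Record graph := Graph { gV : {fset V}; gE : {fset edge} }.

Definition wf (g : graph) : Prop :=
  forall e, e \in gE g -> e.1.1 \in gV g /\ e.1.2 \in gV g.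

Definition subgraph (g g' : graph) : Prop :=
  gV g `<=` gV g' /\ gE g `<=` gE g'.

Definition distinct_w (S : {fset edge}) : Prop :=
  {in S &, injective (fun e : edge => e.2)}.

Definition joins (e : edge) (x y : V) : bool :=
  (e.1 == (x, y)) || (e.1 == (y, x)).

Definition endpoint (e : edge) (x : V) : bool := (x == e.1.1) || (x == e.1.2).

Fixpoint walk (S : {fset edge}) (x : V) (p : seq (edge * V)) : bool :=
  if p is (e, y) :: p' then [&& e \in S, joins e x y & walk S y p'] else true.

Definition gpath (S : {fset edge}) (u v : V) (p : seq (edge * V)) : bool :=
  [&& walk S u p, last u (map snd p) == v & uniq (u :: map snd p)].

Definition path_below (S : {fset edge}) (u v : V) (c : R) : Prop :=
  exists p, gpath S u v p /\ all (fun ev : edge * V => ev.1.2 < c) p.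

Definition connected (S : {fset edge}) (x y : V) : Prop :=
  exists p, gpath S x y p.

(* acyclic: no edge of F closes a cycle with the other edges of F
   (self-loops are excluded, since x is connected to itself) *)
Definition forest (F : {fset edge}) : Prop :=
  forall e, e \in F -> ~ connected (F `\ e) e.1.1 e.1.2.

Definition spanning_forest (S F : {fset edge}) : Prop :=
  [/\ F `<=` S, forest F & forall x y, connected S x y -> connected F x y].

Definition msf (S T : {fset edge}) : Prop :=
  spanning_forest S T /\
  forall F, spanning_forest S F -> \sum_(e <- T) e.2 <= \sum_(e <- F) e.2.

Definition compresses (G H : graph) (nab : {fset V}) : Prop :=
  forall G' : graph,
    wf G' -> subgraph G G' ->
    distinct_w (gE G') ->
    distinct_w ((gE G' `\` gE G) `|` gE H) ->
    (forall e, e \in gE G' `\` gE G -> forall x, endpoint e x ->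
        x \in gV G -> x \in nab) ->
    (* the extra vertices of H are not touched by G' \ G *)
    (forall e, e \in gE G' `\` gE G -> forall x, endpoint e x ->
        x \in gV H -> x \in nab) ->
    forall T T', msf (gE G') T -> msf ((gE G' `\` gE G) `|` gE H) T' ->
      T `&` (gE G' `\` gE G) = T' `&` (gE G' `\` gE G).

End Graphs.

From HB Require Import structures.
From mathcomp Require Import all_boot all_order all_algebra.
From mathcomp Require Import finmap.
From Stdlib Require Import Classical.
From mathcomp Require Import lra.
Import Order.TTheory GRing.Theory Num.Theory.
Set Implicit Arguments. Unset Strict Implicit. Unset Printing Implicit Defensive.
Local Open Scope fset_scope.
Local Open Scope ring_scope.

(* With distinct weights, the cycle property characterises the minimum spanning
   forest of an edge set S: an edge e of S belongs to it iff no walk of edges of S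
   lighter than e joins the endpoints of e.

   (ii) -> (i): let e be an edge of G' \ G.  A walk in G' lighter than e splits
   into edges of G' \ G and maximal pieces inside G; since G' \ G meets G only
   in nab, each piece starts and ends in nab (or is empty), so it can be replaced
   by a walk in H lighter than e, and conversely.  Hence the cycle property gives
   the same answer for e in G' and in (G' \ G) + H.

   (i) -> (ii): add to G an edge uv whose weight c' is fresh and compares with
   every existing weight as c does.  Compression says that this edge enters the
   minimum spanning forest of G + uv iff it enters that of H + uv, i.e., by the
   cycle property, lighter u-v paths exist in both graphs or in neither. *)

Lemma exists_argmin (X : eqType) d (T : orderType d) (s : seq X) (P : X -> Prop)
    (f : X -> T) :
  (exists2 x, x \in s & P x) ->
  exists x, [/\ x \in s, P x & forall y, y \in s -> P y -> (f x <= f y)%O].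
Proof.
elim: s => [[x //]|a s IH] exP.
case: (classic (exists2 x, x \in s & P x)) => [/IH[m [ms Pm minm]]|noPs].
  case: (classic (P a /\ (f a <= f m)%O)) => [[Pa am]|].
    exists a; split=> // [|y]; first exact: mem_head.
    by rewrite in_cons => /predU1P[-> //|ys Py]; apply: le_trans am (minm y ys Py).
  move=> not_am; exists m; split=> // [|y]; first by rewrite in_cons ms orbT.
  rewrite in_cons => /predU1P[-> Pa|]; last exact: minm.
  by rewrite leNgt; apply/negP => ma; apply: not_am; split=> //; apply: ltW.
have Pa : P a.
  by case: exP => x; rewrite in_cons => /predU1P[-> //|xs Px]; case: noPs; exists x.
exists a; split=> // [|y]; first exact: mem_head.
by rewrite in_cons => /predU1P[-> //|ys Py]; case: noPs; exists y.
Qed.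

Section Reachability.
Variables (V : choiceType) (R : realFieldType).
Notation edge := (edge V R).
Implicit Types (S F T : {fset edge}) (x y z a b : V) (p q : seq (edge * V))
  (e f g r : edge) (c : R).

Definition reach S x y := exists2 p, walk S x p & last x (map snd p) = y.

Definition below S c := [fset e in S | e.2 < c].

Lemma in_below S c e : (e \in below S c) = (e \in S) && (e.2 < c).
Proof. by rewrite !inE. Qed.

Lemma joinsC e x y : joins e x y = joins e y x.
Proof. by rewrite /joins orbC. Qed.

Lemma joinsE e x y :
  joins e x y -> (e.1.1 = x /\ e.1.2 = y) \/ (e.1.1 = y /\ e.1.2 = x).
Proof. by case: e => [[a b] r] /orP[] /eqP[-> ->]; [left|right]. Qed.

Lemma joins_ends e : joins e e.1.1 e.1.2.
Proof. by rewrite /joins -surjective_pairing eqxx. Qed.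

Lemma joins_endpoint e x y : joins e x y -> endpoint e x /\ endpoint e y.
Proof. by case/joinsE=> [[<- <-]|[<- <-]]; rewrite /endpoint !eqxx ?orbT. Qed.

Lemma walk_cat S x p q :
  walk S x (p ++ q) = walk S x p && walk S (last x (map snd p)) q.
Proof. by elim: p x => [|[e z] p IH] x //=; rewrite IH !andbA. Qed.

Lemma walk_sub S S' x p :
  (forall ev, ev \in p -> ev.1 \in S -> ev.1 \in S') -> walk S x p -> walk S' x p.
Proof.
elim: p x => [|[e z] p IH] x //= sub /and3P[eS -> w].
rewrite (sub (e, z)) ?mem_head // IH // => ev evp.
by apply: sub; rewrite in_cons evp orbT.
Qed.

Lemma walk_below S c x p :
  walk (below S c) x p = walk S x p && all (fun ev : edge * V => ev.1.2 < c) p.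
Proof.
elim: p x => [|[e z] p IH] x //=.
by rewrite IH in_below; case: (e \in S); case: (e.2 < c); case: joins; rewrite ?andbF.
Qed.

Lemma reach_refl S x : reach S x x.
Proof. by exists [::]. Qed.

Lemma reach_edge S e x y : e \in S -> joins e x y -> reach S x y.
Proof. by move=> eS j; exists [:: (e, y)]; rewrite //= eS j. Qed.

Lemma reach_ends S e : e \in S -> reach S e.1.1 e.1.2.
Proof. by move=> eS; apply: reach_edge eS (joins_ends e). Qed.

Lemma reach_trans S x y z : reach S x y -> reach S y z -> reach S x z.
Proof.
move=> [p wp lp] [q wq lq]; exists (p ++ q).
  by rewrite walk_cat wp lp.
by rewrite map_cat last_cat lp.
Qed.

Lemma reach_sym S x y : reach S x y -> reach S y x.
Proof.
move=> [p + <-]; elim: p x => [|[e z] p IH] x /=.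
  by move=> _; apply: reach_refl.
case/and3P=> eS j /IH zy; apply: reach_trans zy _.
by apply: reach_edge eS _; rewrite joinsC.
Qed.

Lemma joins_reach S e x y : joins e x y -> reach S x y <-> reach S e.1.1 e.1.2.
Proof. by case/joinsE=> [[-> ->]|[-> ->]]; split=> //; apply: reach_sym. Qed.

Lemma reach_of_edges S S' x y :
  (forall e, e \in S -> reach S' e.1.1 e.1.2) -> reach S x y -> reach S' x y.
Proof.
move=> edges [p + <-]; elim: p x => [|[e z] p IH] x /=.
  by move=> _; apply: reach_refl.
case/and3P=> eS j /IH; apply: reach_trans.
by apply/(joins_reach _ j)/edges.
Qed.

Lemma reach_sub S S' x y : {subset S <= S'} -> reach S x y -> reach S' x y.
Proof. by move=> sub; apply: reach_of_edges => e /sub /reach_ends. Qed.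

Lemma reach_fsetD1 S r x y : reach S x y ->
  [\/ reach (S `\ r) x y,
      reach (S `\ r) x r.1.1 /\ reach (S `\ r) r.1.2 y |
      reach (S `\ r) x r.1.2 /\ reach (S `\ r) r.1.1 y].
Proof.
move=> [p + <-]; elim: p x => [|[e z] p IH] x /=.
  by move=> _; constructor 1; apply: reach_refl.
case/and3P=> eS j /IH {IH}; have [<-|ner] := eqVneq e r.
  case/joinsE: j => [[<- <-]|[<- <-]] [zy|[zr1 r2y]|[zr2 r1y]].
  - by constructor 2; split=> //; apply: reach_refl.
  - by constructor 2; split=> //; apply: reach_refl.
  - by constructor 1.
  - by constructor 3; split=> //; apply: reach_refl.
  - by constructor 1.
  - by constructor 3; split=> //; apply: reach_refl.
have xz : reach (S `\ r) x z by apply: reach_edge j; rewrite !inE ner.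
case=> [zy|[zr ry]|[zr ry]].
- by constructor 1; apply: reach_trans zy.
- by constructor 2; split=> //; apply: reach_trans zr.
- by constructor 3; split=> //; apply: reach_trans zr.
Qed.

Lemma walk_exit S (C : V -> Prop) x p : walk S x p -> C x ->
    ~ C (last x (map snd p)) ->
  exists f a b, [/\ f \in S, joins f a b, C a, ~ C b &
                    reach (S `\ f) b (last x (map snd p))].
Proof.
move=> wp Cx nCl.
(* Taking the last exit makes the rest of the walk avoid C, hence avoid f. *)
suff [[/(_ Cx) []]|//] :
    (~ C x /\ forall ev, ev \in p -> ~ C ev.1.1.1 /\ ~ C ev.1.1.2) \/
    exists f a b, [/\ f \in S, joins f a b, C a, ~ C b &
                      reach (S `\ f) b (last x (map snd p))].
elim: p x wp {Cx} nCl => [|[g z] p IH] x /=; first by move=> _ nCx; left.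
case/and3P=> gS j wp /(IH _ wp)[[nCz avoid]|]; last by right.
have [Cx|nCx] := classic (C x); [right|left].
  exists g, x, z; split=> //; exists p => //.
  apply: walk_sub wp => ev evp evS; rewrite !inE evS andbT.
  apply/eqP => evg; have [nC1 nC2] := avoid ev evp; rewrite evg in nC1 nC2.
  by case/joinsE: j => [[gx _]|[_ gx]]; [apply: nC1|apply: nC2]; rewrite gx.
split=> // ev; rewrite in_cons => /predU1P[->|]; last exact: avoid.
by case/joinsE: j => [[-> ->]|[-> ->]].
Qed.

Lemma shorten_walk S x p : walk S x p -> exists q, gpath S x (last x (map snd p)) q.
Proof.
elim: p x => [|[f z] p IH] x /=; first by exists [::]; rewrite /gpath /= eqxx.
case/and3P=> fS j /IH[q /and3P[wq /eqP lq uq]].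
have [xz|nxz] := eqVneq x z; first by subst z; exists q; rewrite /gpath wq lq eqxx.
case: (boolP (x \in map snd q)) => [/mapP[[g y] yq /= xy]|xq].
  case/splitPr: yq wq lq uq => q1 q2; rewrite walk_cat map_cat last_cat /= -xy.
  case/andP=> _ /and3P[_ _ wq2] lq /andP[_]; rewrite cat_uniq => /and3P[_ _ uq2].
  by exists q2; rewrite /gpath wq2 lq eqxx.
exists ((f, z) :: q); rewrite /gpath /= fS j wq lq eqxx.
by rewrite in_cons negb_or nxz xq.
Qed.

Lemma connectedP S x y : connected S x y <-> reach S x y.
Proof.
split=> [[p /and3P[wp /eqP lp _]]|[p wp <-]]; first by exists p.
exact: shorten_walk.
Qed.

Lemma path_belowP S x y c : path_below S x y c <-> reach (below S c) x y.
Proof.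
split=> [[p [/and3P[wp /eqP lp _] lt]]|/connectedP[p]].
  by exists p; rewrite // walk_below wp.
rewrite /gpath walk_below -andbA => /and4P[wp lt lp up].
by exists p; rewrite /gpath wp lp.
Qed.

Lemma reach_wf (G : graph V R) S x y :
  wf G -> {subset S <= gE G} -> reach S x y -> x = y \/ (x \in gV G /\ y \in gV G).
Proof.
move=> wfG sub [p + <-]; elim: p x => [|[e z] p IH] x /=; first by left.
case/and3P=> /sub/wfG[e1 e2] j /IH IHz; right.
have [xG zG] : x \in gV G /\ z \in gV G by case/joinsE: j => [[<- <-]|[<- <-]].
by split=> //; case: IHz => [<-|[]].
Qed.

End Reachability.

Section MinimumSpanningForests.
Variables (V : choiceType) (R : realFieldType).
Notation edge := (edge V R).
Implicit Types (S F T : {fset edge}) (x y : V) (e f g r a : edge).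

Lemma forestP F : forest F <-> forall e, e \in F -> ~ reach (F `\ e) e.1.1 e.1.2.
Proof. by split=> fF e eF /connectedP; apply: fF. Qed.

Lemma spanning_forestP S F : spanning_forest S F <->
  [/\ F `<=` S, forest F & forall x y, reach S x y -> reach F x y].
Proof. by split=> -[sFS fF spF]; split=> // x y /connectedP/spF/connectedP. Qed.

Lemma reach_exchange T r a : reach T a.1.1 a.1.2 -> ~ reach (T `\ r) a.1.1 a.1.2 ->
  reach (a |` (T `\ r)) r.1.1 r.1.2.
Proof.
have sub : {subset T `\ r <= a |` (T `\ r)} by move=> e; apply: fset1Ur.
have a12 : reach (a |` (T `\ r)) a.1.1 a.1.2 := reach_ends (fset1U1 a _).
move=> /(reach_fsetD1 r)[a12'|[a1r1 r2a2]|[a1r2 r1a2]] nc; first by case: nc.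
  apply: reach_trans (reach_sym (reach_sub sub a1r1)) _.
  exact: reach_trans a12 (reach_sym (reach_sub sub r2a2)).
apply: reach_trans (reach_sub sub r1a2) _.
exact: reach_trans (reach_sym a12) (reach_sub sub a1r2).
Qed.

Lemma exchange_forest T r a : forest T -> ~ reach (T `\ r) a.1.1 a.1.2 ->
  forest (a |` (T `\ r)).
Proof.
move=> /forestP fT nc; apply/forestP => g.
have [-> _|nga] := eqVneq g a.
  apply: contra_not nc; apply: reach_sub => e.
  by rewrite !inE => /andP[/negbTE -> /=].
rewrite in_fset1U (negbTE nga) /= => gTr.
have gT : g \in T by move: gTr; rewrite in_fsetD1 => /andP[].
have sub_g : {subset (a |` (T `\ r)) `\ g `\ a <= T `\ g}.
  by move=> e; rewrite !inE => /andP[/negbTE -> /=] /andP[-> /andP[]].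
have sub_r : {subset (a |` (T `\ r)) `\ g `\ a <= T `\ r}.
  by move=> e; rewrite !inE => /andP[/negbTE -> /=] /andP[].
have g12 : reach (T `\ r) g.1.1 g.1.2 := reach_ends gTr.
move=> /(reach_fsetD1 a)[g12'|[g1a1 a2g2]|[g1a2 a1g2]].
- by apply: (fT g gT); apply: reach_sub sub_g g12'.
- apply: nc; apply: reach_trans (reach_sym (reach_sub sub_r g1a1)) _.
  exact: reach_trans g12 (reach_sym (reach_sub sub_r a2g2)).
- apply: nc; apply: reach_trans (reach_sub sub_r a1g2) _.
  exact: reach_trans (reach_sym g12) (reach_sub sub_r g1a2).
Qed.

Lemma exchange_spanning_forest S T r a : spanning_forest S T -> a \in S ->
  ~ reach (T `\ r) a.1.1 a.1.2 -> spanning_forest S (a |` (T `\ r)).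
Proof.
move=> /spanning_forestP[sTS fT spT] aS nc; apply/spanning_forestP; split.
- apply/fsubsetP => e /fset1UP[-> //|]; rewrite in_fsetD1 => /andP[_].
  exact: (fsubsetP sTS).
- exact: exchange_forest.
- move=> x y /spT; apply: reach_of_edges => e eT.
  have [->|ner] := eqVneq e r.
    exact: reach_exchange (spT _ _ (reach_ends aS)) nc.
  by apply: reach_ends; rewrite !inE ner eT orbT.
Qed.

Lemma sum_weight_exchange T r a : r \in T -> a \notin T `\ r ->
  \sum_(e <- a |` (T `\ r)) e.2 = \sum_(e <- T) e.2 + (a.2 - r.2).
Proof. by move=> rT aTr; rewrite big_fsetU1 // (big_fsetD1 _ rT) /=; lra. Qed.

Lemma msf_exchange_le S T r a : msf S T -> r \in T -> a \in S ->
  ~ reach (T `\ r) a.1.1 a.1.2 -> r.2 <= a.2.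
Proof.
move=> [sfT minT] rT aS nc.
have aTr : a \notin T `\ r by apply/negP => /reach_ends.
have := minT _ (exchange_spanning_forest sfT aS nc).
by rewrite sum_weight_exchange // lerDl subr_ge0.
Qed.

Lemma msf_no_lighter_path S T e : msf S T -> e \in T ->
  ~ reach (below S e.2) e.1.1 e.1.2.
Proof.
move=> mT eT [q wq lq].
have [/spanning_forestP[_ /forestP fT _] _] := mT.
have nC2 : ~ reach (T `\ e) e.1.1 (last e.1.1 (map snd q)) by rewrite lq; apply: fT.
have [f [a [b [/[!in_below]/andP[fS lt_fe] j Ca nCb _]]]] :=
  @walk_exit _ _ _ (reach (T `\ e) e.1.1) _ _ wq (reach_refl _ _) nC2.
have nc : ~ reach (T `\ e) f.1.1 f.1.2 by move/(joins_reach _ j)/(reach_trans Ca).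
by have := msf_exchange_le mT eT fS nc; rewrite leNgt lt_fe.
Qed.

Lemma msf_mem_of_no_lighter_path S T e : distinct_w S -> msf S T -> e \in S ->
  ~ reach (below S e.2) e.1.1 e.1.2 -> e \in T.
Proof.
move=> dS mT eS nl; apply: contraT => eT.
have [/spanning_forestP[sTS /forestP fT spT] _] := mT.
have [p wp lp] := spT _ _ (reach_ends eS).
have nC2 : ~ reach (below T e.2) e.1.1 (last e.1.1 (map snd p)).
  rewrite lp; apply: contra_not nl; apply: reach_sub => g.
  by rewrite !in_below => /andP[/(fsubsetP sTS) -> ->].
(* f leaves the light component of e.1.1 along a T-walk to e.1.2; it is
   heavier than e and swapping it for e would lighten T. *)
have [f [a [b [fT' j Ca nCb]]]] :=
  @walk_exit _ _ _ (reach (below T e.2) e.1.1) _ _ wp (reach_refl _ _) nC2.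
rewrite lp => b2.
have lt_ef : e.2 < f.2.
  rewrite lt_neqAle leNgt; apply/andP; split.
    apply/eqP => ef; have fe := dS _ _ (fsubsetP sTS f fT') eS (esym ef).
    by rewrite -fe fT' in eT.
  apply/negP => lt_fe; apply: nCb; apply: reach_trans Ca (reach_edge _ j).
  by rewrite in_below fT'.
have nc : ~ reach (T `\ f) e.1.1 e.1.2.
  have sub : {subset below T e.2 <= T `\ f}.
    move=> g; rewrite in_below in_fsetD1 => /andP[-> lt_ge]; rewrite andbT.
    by apply/eqP => gf; rewrite gf ltNge ltW in lt_ge.
  move=> h; apply: (fT f fT'); apply/(joins_reach _ j).
  exact: reach_trans (reach_sym (reach_sub sub Ca)) (reach_trans h (reach_sym b2)).
by have := msf_exchange_le mT fT' eS nc; rewrite leNgt lt_ef.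
Qed.

Lemma msf_memP S T e : distinct_w S -> msf S T -> e \in S ->
  e \in T <-> ~ reach (below S e.2) e.1.1 e.1.2.
Proof.
move=> dS mT eS.
by split; [exact: msf_no_lighter_path | exact: msf_mem_of_no_lighter_path].
Qed.

Lemma spanning_forest_exists S : exists F, spanning_forest S F.
Proof.
pose spans F := forall x y, reach S x y -> reach F x y.
have [|F [/[!fpowersetE] sFS spF minF]] :=
  @exists_argmin _ _ _ (fpowerset S) spans (fun F => #|` F|).
  by exists S; rewrite ?fpowersetE.
exists F; apply/spanning_forestP; split=> //; apply/forestP => g gF cyc.
have spF' : spans (F `\ g).
  move=> x y /spF; apply: reach_of_edges => e eF.
  have [->//|neg] := eqVneq e g.
  by apply: reach_ends; rewrite !inE neg eF.
have := minF (F `\ g) _ spF'; rewrite fpowersetE (fsubset_trans (fsubsetDl _ _) sFS).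
by rewrite leEnat (cardfsD1 g F) gF ltnn => /(_ isT).
Qed.

Lemma msf_exists S : exists T, msf S T.
Proof.
have [F sF] := spanning_forest_exists S.
have inP F' : spanning_forest S F' -> F' \in fpowerset S by case; rewrite fpowersetE.
have [|T [_ sT minT]] := @exists_argmin _ _ _ (fpowerset S) (spanning_forest S)
  (fun F => \sum_(e <- F) e.2); first by exists F; first exact: inP.
by exists T; split=> // F' sF'; apply: minT (inP _ sF') sF'.
Qed.

End MinimumSpanningForests.

Section FreshEdge.
Variables (V : choiceType) (R : realFieldType).
Notation edge := (edge V R).
Implicit Types (S T : {fset edge}) (e f : edge).

Lemma exists_fresh_threshold (s : seq R) (c : R) :
  exists c', c' \notin s /\ {in s, forall w, (w < c) = (w < c')}.
Proof.
pose m := \big[Order.max/(c - 1)]_(w <- s | w < c) w.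
have lt_mc : m < c by apply: bigmax_lt => //; lra.
have le_wm w : w \in s -> w < c -> w <= m by move=> ws wc; apply: le_bigmax_seq ws wc.
exists ((m + c) / 2); split.
  apply/negP => /le_wm; have lt_c : (m + c) / 2 < c by lra.
  by move/(_ lt_c); lra.
move=> w ws; have [wc|cw] := ltP w c; apply/esym.
  by have := le_wm w ws wc; lra.
by apply/negbTE; rewrite -leNgt; lra.
Qed.

Lemma eq_below S c c' : {in S, forall f, (f.2 < c) = (f.2 < c')} ->
  below S c = below S c'.
Proof.
move=> eqc; apply/fsetP => f; rewrite !in_below.
by case fS: (f \in S); rewrite //= eqc.
Qed.

Lemma below_fset1U S e : below (e |` S) e.2 = below S e.2.
Proof.
apply/fsetP => f; rewrite !in_below in_fset1U.
by case: eqVneq => [->|] /=; rewrite ?ltxx ?andbF.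
Qed.

Lemma distinct_w_fset1U S e : distinct_w S -> {in S, forall f, f.2 != e.2} ->
  distinct_w (e |` S).
Proof.
move=> dS new f g /fset1UP[->|fS] /fset1UP[->|gS] //= fg.
- by move: (new g gS); rewrite -fg eqxx.
- by move: (new f fS); rewrite fg eqxx.
- exact: dS.
Qed.

Lemma msf_fset1U_memP S T e : distinct_w S -> {in S, forall f, f.2 != e.2} ->
  msf (e |` S) T -> e \in T <-> ~ reach (below S e.2) e.1.1 e.1.2.
Proof.
move=> dS new mT; rewrite -below_fset1U.
exact: msf_memP (distinct_w_fset1U dS new) mT (fset1U1 _ _).
Qed.

End FreshEdge.

Section Transfer.
Variables (V : choiceType) (R : realFieldType).
Variables (g h : graph V R) (O : {fset edge V R}) (nab : {fset V}) (c : R).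
Hypothesis wf_g : wf g.
Hypothesis reach_gh : forall u v, u \in nab -> v \in nab ->
  reach (below (gE g) c) u v -> reach (below (gE h) c) u v.
Hypothesis O_boundary : forall e, e \in O -> forall z, endpoint e z ->
  z \in gV g -> z \in nab.

Lemma reach_below_segment x y : (x \in gV g -> x \in nab) -> (y \in gV g -> y \in nab) ->
  reach (below (gE g) c) x y -> reach (below (gE h) c) x y.
Proof.
move=> gx gy xy.
have sub : {subset below (gE g) c <= gE g} by move=> e; rewrite in_below => /andP[].
have [<-|[xg yg]] := reach_wf wf_g sub xy; first exact: reach_refl.
exact: reach_gh (gx xg) (gy yg) xy.
Qed.

Lemma reach_below_transfer x y : (x \in gV g -> x \in nab) -> (y \in gV g -> y \in nab) ->
  reach (below (O `|` gE g) c) x y -> reach (below (O `|` gE h) c) x y.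
Proof.
have sub_h : {subset below (gE h) c <= below (O `|` gE h) c}.
  by move=> e; rewrite !in_below in_fsetU => /andP[-> ->]; rewrite orbT.
move=> gx gy [p wp lp].
suff from_segment : forall s, (s \in gV g -> s \in nab) ->
    reach (below (gE g) c) s x -> reach (below (O `|` gE h) c) s y.
  exact: from_segment gx (reach_refl _ _).
elim: p x wp lp {gx} => [|[f z] p IH] x /=.
  by move=> _ -> s gs sy; apply: reach_sub sub_h (reach_below_segment gs gy sy).
case/and3P; rewrite in_below in_fsetU => /andP[/orP[fO|fg] fc] j w ly s gs sx.
  have [ex ez] := joins_endpoint j.
  apply: reach_trans (reach_sub sub_h (reach_below_segment gs (O_boundary fO ex) sx)) _.
  have fB : f \in below (O `|` gE h) c by rewrite in_below in_fsetU fO fc.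
  exact: reach_trans (reach_edge fB j) (IH z w ly z (O_boundary fO ez) (reach_refl _ _)).
have fB : f \in below (gE g) c by rewrite in_below fg fc.
exact: IH w ly s gs (reach_trans sx (reach_edge fB j)).
Qed.

End Transfer.

Section Compression.
Variables (V : choiceType) (R : realFieldType).
Implicit Types (G H : graph V R) (nab : {fset V}).

Lemma compresses_fset1U_msf G H nab e T T' :
  wf G -> nab `<=` gV G -> e.1.1 \in nab -> e.1.2 \in nab -> e \notin gE G ->
  distinct_w (e |` gE G) -> distinct_w (e |` gE H) -> compresses G H nab ->
  msf (e |` gE G) T -> msf (e |` gE H) T' -> (e \in T) = (e \in T').
Proof.
move=> wfG nG e1 e2 eG dG' dH' hc mT mT'.
have new_part : (e |` gE G) `\` gE G = [fset e].
  by apply/fsetP => f; rewrite !inE; case: eqVneq => [->|_]; rewrite ?eG ?andNb.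
have wfG' : wf (Graph (gV G) (e |` gE G)).
  by move=> f /fset1UP[->|/wfG //]; split; apply: (fsubsetP nG).
have boundary (W : {fset V}) f : f \in [fset e] -> forall x, endpoint f x ->
    x \in W -> x \in nab.
  by move=> /fset1P-> x /orP[]/eqP->.
have := hc (Graph (gV G) (e |` gE G)) wfG' (conj (fsubset_refl _) (fsubsetU1 _ _)) dG'.
rewrite /= new_part => /(_ dH' (boundary _) (boundary _) T T' mT mT').
by move/fsetP/(_ e); rewrite !in_fsetI in_fset1 eqxx !andbT.
Qed.

Lemma compresses_path_below G H nab :
  wf G -> distinct_w (gE G) -> distinct_w (gE H) -> nab `<=` gV G ->
  compresses G H nab ->
  forall u v, u \in nab -> v \in nab -> forall c : R,
    path_below (gE H) u v c <-> path_below (gE G) u v c.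
Proof.
move=> wfG dG dH nG hc u v un vn c.
have [c' [c'_fresh ltc']] := exists_fresh_threshold [seq f.2 | f <- gE G `|` gE H] c.
pose e : edge V R := ((u, v), c').
have weight_GH f : f \in gE G `|` gE H -> f.2 != c' /\ (f.2 < c) = (f.2 < c').
  move=> fGH; have fw := map_f (fun f : edge V R => f.2) fGH.
  by split; [apply: contraNneq c'_fresh => <- | exact: ltc'].
have new_G : {in gE G, forall f, f.2 != e.2}.
  by move=> f fG; apply: (weight_GH f _).1; rewrite in_fsetU fG.
have new_H : {in gE H, forall f, f.2 != e.2}.
  by move=> f fH; apply: (weight_GH f _).1; rewrite in_fsetU fH orbT.
have below_G : below (gE G) c = below (gE G) c'.
  by apply: eq_below => f fG; apply: (weight_GH f _).2; rewrite in_fsetU fG.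
have below_H : below (gE H) c = below (gE H) c'.
  by apply: eq_below => f fH; apply: (weight_GH f _).2; rewrite in_fsetU fH orbT.
have eG : e \notin gE G by apply/negP => /new_G; rewrite eqxx.
have [T mT] := msf_exists (e |` gE G).
have [T' mT'] := msf_exists (e |` gE H).
have same : (e \in T) = (e \in T').
  apply: (compresses_fset1U_msf wfG nG _ _ eG _ _ hc mT mT') => //.
    exact: distinct_w_fset1U dG new_G.
  exact: distinct_w_fset1U dH new_H.
have := msf_fset1U_memP dG new_G mT; have := msf_fset1U_memP dH new_H mT'.
rewrite -same !path_belowP below_G below_H => hH hG.
by split=> r; apply: NNPP => nr; [apply: (hH.1 (hG.2 nr)) | apply: (hG.1 (hH.2 nr))].
Qed.

Lemma path_below_compresses G H nab :
  wf G -> wf H ->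
  (forall u v, u \in nab -> v \in nab -> forall c : R,
    path_below (gE H) u v c <-> path_below (gE G) u v c) ->
  compresses G H nab.
Proof.
move=> wfG wfH hGH G' _ [_ sGG'] dG' dU bdG bdH T T' mT mT'.
set O := gE G' `\` gE G in dU bdG bdH mT' *.
have G'E : gE G' = O `|` gE G by rewrite fsetUDr fsetDv fsetD0 (fsetUidPl _ _ sGG').
have reach_eq f : f \in O -> reach (below (gE G') f.2) f.1.1 f.1.2 <->
    reach (below (O `|` gE H) f.2) f.1.1 f.1.2.
  move=> fO; have [end1 end2] := joins_endpoint (joins_ends f); rewrite G'E.
  split.
    apply: (reach_below_transfer wfG _ bdG (bdG f fO _ end1) (bdG f fO _ end2)).
    by move=> u v un vn /path_belowP/(hGH u v un vn)/path_belowP.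
  apply: (reach_below_transfer wfH _ bdH (bdH f fO _ end1) (bdH f fO _ end2)).
  by move=> u v un vn /path_belowP/(hGH u v un vn)/path_belowP.
apply/fsetP => f; rewrite !in_fsetI.
case: (boolP (f \in O)) => fO; rewrite ?andbF ?andbT //.
have fG' : f \in gE G' by rewrite G'E in_fsetU fO.
have fU : f \in O `|` gE H by rewrite in_fsetU fO.
apply/idP/idP => [/(msf_memP dG' mT fG') nl|/(msf_memP dU mT' fU) nl].
  by apply/(msf_memP dU mT' fU) => /(reach_eq f fO)/nl.
by apply/(msf_memP dG' mT fG') => /(reach_eq f fO)/nl.
Qed.

End Compression.

Theorem lemma5p10 (V : choiceType) (R : realFieldType)
  (G H : graph V R) (nab : {fset V}) :
  wf G -> wf H -> distinct_w (gE G) -> distinct_w (gE H) ->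
  nab `<=` gV G -> nab `<=` gV H ->
  compresses G H nab <->
  (forall u v, u \in nab -> v \in nab -> forall c : R,
     path_below (gE H) u v c <-> path_below (gE G) u v c).
Proof.
move=> wfG wfH dG dH nG _; split.
  exact: compresses_path_below.
exact: path_below_compresses.
Qed.
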